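(* Let $S:=T_1T_2\cdots T_{N-1}$. Let $i,k$ be integers with $k\ge0$, $i\le N-1$ and $i-k>1$. Then $$(T_{i-k}T_{i-k+1}\cdots T_i)(S\,T_{N-1}T_{N-2}\cdots T_i)=(S\,T_{N-1}T_{N-2}\cdots T_{i+1})(T_{i-k-1}T_{i-k}\cdots T_i)$$ in $\mathcal H_N(s)$ (where $T_{N-1}\cdots T_{i+1}$ is the empty product when $i=N-1$).
   Context: $N\ge2$, $s$ an indeterminate. $\mathcal H_N(s)$ is the algebra generated by $T_1,\dots,T_{N-1}$ with relations $(T_i+1)(T_i-s)=0$, $T_iT_{i+1}T_i=T_{i+1}T_iT_{i+1}$, $T_iT_j=T_jT_i$ for $|i-j|>1$. *)

From mathcomp Require Import all_boot all_order all_algebra.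
Set Implicit Arguments. Unset Strict Implicit. Unset Printing Implicit Defensive.
Import GRing.Theory.
Local Open Scope ring_scope.

Definition ascprod (A : ringType) (T : nat -> A) (a b : nat) : A :=
  \prod_(a <= j < b.+1) T j.

Definition descprod (A : ringType) (T : nat -> A) (b a : nat) : A :=
  \prod_(j <- rev (index_iota a b.+1)) T j.

Definition hecke_rels (R : comRingType) (A : algType R) (N : nat) (s : R)
  (T : nat -> A) : Prop :=
  [/\ (forall i, (1 <= i <= N.-1)%N -> (T i + 1) * (T i - s%:A) = 0),
      (forall i, (1 <= i)%N -> (i.+1 <= N.-1)%N ->
          T i * T i.+1 * T i = T i.+1 * T i * T i.+1) &
      (forall i j, (1 <= i <= N.-1)%N -> (1 <= j <= N.-1)%N ->
          (i.+1 < j)%N || (j.+1 < i)%N -> T i * T j = T j * T i)].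

(* Write S = T_1 ... T_n with n = N - 1.  The braid relation together with
   far commutativity gives T_(m+1) S' = S' T_m for any ascending product S'
   containing T_m T_(m+1), hence (T_a ... T_b) S = S (T_(a-1) ... T_(b-1))
   for 2 <= a.  Applied to the left factor, and after splitting off the last
   factor T_i of T_(N-1) ... T_i, the identity reduces to the commutation of
   T_(i-k-1) ... T_(i-1) with T_(N-1) ... T_(i+1), whose indices are at
   distance at least two. *)

From mathcomp Require Import all_boot all_order all_algebra.
From mathcomp Require Import zify.
Import GRing.Theory.
Local Open Scope ring_scope.

Lemma ascprod_recr (A : ringType) (T : nat -> A) a b :
  (0 < b)%N -> (a <= b)%N -> ascprod T a b = ascprod T a b.-1 * T b.
Proof. by case: b => // b _ le_ab; rewrite /ascprod big_nat_recr. Qed.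

Lemma ascprod_geq (A : ringType) (T : nat -> A) a b :
  (b < a)%N -> ascprod T a b = 1.
Proof. by move=> lt_ba; rewrite /ascprod big_geq. Qed.

Lemma descprod_recl (A : ringType) (T : nat -> A) b a :
  (a <= b)%N -> descprod T b a = descprod T b a.+1 * T a.
Proof.
move=> le_ab; rewrite /descprod /index_iota subSn // subSS.
by rewrite [iota a _]/= rev_cons big_rcons.
Qed.

Section BraidRelations.

Variables (A : ringType) (T : nat -> A) (n : nat).

Hypothesis braid : forall m, (1 <= m)%N -> (m.+1 <= n)%N ->
  T m * T m.+1 * T m = T m.+1 * T m * T m.+1.
Hypothesis far_comm : forall i j, (1 <= i <= n)%N -> (1 <= j <= n)%N ->
  (i.+1 < j)%N || (j.+1 < i)%N -> T i * T j = T j * T i.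

Lemma commr_T_prod x (r : seq nat) : (1 <= x <= n)%N ->
  (forall y, y \in r -> (1 <= y <= n)%N && ((x.+1 < y)%N || (y.+1 < x)%N)) ->
  GRing.comm (T x) (\prod_(y <- r) T y).
Proof.
move=> x_range r_far; rewrite big_seq; apply: commr_prod => y /r_far.
by case/andP=> y_range y_far; apply: far_comm.
Qed.

Lemma T_ascprod_shift m a b : (1 <= a <= m)%N -> (m < b <= n)%N ->
  T m.+1 * ascprod T a b = ascprod T a b * T m.
Proof.
case/andP=> a_gt0 le_am /andP[lt_mb le_bn].
have lt_mb1 : (m < b.+1)%N by lia.
have lt_m1b1 : (m.+1 < b.+1)%N by lia.
rewrite /ascprod (big_cat_nat le_am (ltnW lt_mb1)) (big_ltn lt_mb1) (big_ltn lt_m1b1).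
have commL : GRing.comm (T m.+1) (\prod_(a <= j < m) T j).
  by apply: commr_T_prod => [|y]; rewrite ?mem_index_iota; lia.
have commR : GRing.comm (T m) (\prod_(m.+2 <= j < b.+1) T j).
  by apply: commr_T_prod => [|y]; rewrite ?mem_index_iota; lia.
rewrite !mulrA commL -!mulrA; congr (_ * _).
by rewrite -commR !mulrA braid //; lia.
Qed.

Lemma ascprod_cycle_shift a b : (2 <= a)%N -> (b <= n)%N ->
  ascprod T a b * ascprod T 1 n = ascprod T 1 n * ascprod T a.-1 b.-1.
Proof.
move=> le2a; elim: b => [|b IHb] le_bn.
  by rewrite (@ascprod_geq _ T a) ?(@ascprod_geq _ T a.-1) ?mulr1 ?mul1r //; lia.
have [lt_b1a | le_ab1] := ltnP b.+1 a.
  by rewrite (@ascprod_geq _ T a) ?(@ascprod_geq _ T a.-1) ?mulr1 ?mul1r //; lia.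
rewrite ascprod_recr // -mulrA T_ascprod_shift; [|lia..].
rewrite mulrA IHb; last lia.
by rewrite -mulrA [ascprod T a.-1 b]ascprod_recr //; lia.
Qed.

End BraidRelations.

Theorem lemma2p3 (R : comRingType) (A : algType R) (N : nat) (s : R)
  (T : nat -> A) (i k : nat) :
  (2 <= N)%N -> hecke_rels N s T ->
  (i <= N.-1)%N -> (k.+1 < i)%N ->
  ascprod T (i - k) i * (ascprod T 1 N.-1 * descprod T N.-1 i) =
  (ascprod T 1 N.-1 * descprod T N.-1 i.+1) * ascprod T (i - k).-1 i.
Proof.
move=> le2N [_ braid far_comm] le_in lt_ki.
set n := N.-1 in braid far_comm le_in *.
have comm_asc_desc :
    GRing.comm (ascprod T (i - k).-1 i.-1) (descprod T n i.+1).
  rewrite /descprod big_seq; apply: commr_prod => y.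
  rewrite mem_rev mem_index_iota => y_range.
  apply/commr_sym/(@commr_T_prod _ T n far_comm) => [|x];
    by rewrite ?mem_index_iota; lia.
rewrite mulrA ascprod_cycle_shift //; [|lia..].
rewrite descprod_recl; last lia.
rewrite -!mulrA; congr (_ * _).
rewrite mulrA comm_asc_desc -mulrA; congr (_ * _).
by rewrite [ascprod T _ i]ascprod_recr //; lia.
Qed.
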